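(* Let $y_0\in\mathbb{R}$, $b>0$, $\epsilon>0$, and let $f:[y_0,\infty)\to\mathbb{R}$ be such that $p:=1/f$ is well defined and twice differentiable on $[y_0,\infty)$, with $f(y_0)>0$, $f'(y)>0$ and $p''(y)>0$ for all $y\ge y_0$. Assume $b<\int_{y_0}^{\infty}p(y)\,dy$ (the integral may be $+\infty$). For $h>0$ and integers $N\ge 0$ put $\Sigma_{l,h,N}=\sum_{i=1}^{N}h\,p(y_0+hi)$. For each positive integer $j$ let $h^{(j)}=\epsilon/j$ and let $n_2^{(j)}$ be the smallest positive integer $N$ with $\Sigma_{l,h^{(j)},N}\ge b$, and assume that $n_2^{(1)}$ exists. Then for every positive integer $j$, $n_2^{(j)}$ exists and $$h^{(j)}\,n_2^{(j)}\le h^{(1)}\,n_2^{(1)}.$$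
   Context: $\Sigma_{l,h,N}$ is the lower rectangular (right-endpoint) sum for $\int_{y_0}^{y_0+hN}p(y)\,dy$ with step $h$; the empty sum ($N=0$) is $0$. The conditions on $f$ imply $f>0$, $p>0$ and $p$ strictly decreasing on $[y_0,\infty)$. *)

From Stdlib Require Import Reals.
From Coquelicot Require Import Coquelicot.
Open Scope R_scope.

(* One-sided-at-the-endpoint derivative on the half-line [a, +oo):
   g' y is the derivative of g at y relative to [a, +oo)
   (a right derivative at y = a, an ordinary derivative for y > a).
   Only values of g on [a, +oo) are used. *)
Definition is_derive_on_half (a : R) (g g' : R -> R) : Prop :=
  forall y, a <= y ->
    filterlim (fun t => (g t - g y) / (t - y))
      (within (fun t => a <= t /\ t <> y) (locally y)) (locally (g' y)).

Fixpoint sigma_l (p : R -> R) (y0 h : R) (N : nat) : R :=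
  match N with
  | O => 0
  | S n => sigma_l p y0 h n + h * p (y0 + h * INR (S n))
  end.

Definition is_n2 (p : R -> R) (y0 h b : R) (N : nat) : Prop :=
  (1 <= N)%nat /\ b <= sigma_l p y0 h N /\
  forall M : nat, (1 <= M)%nat -> (M < N)%nat -> sigma_l p y0 h M < b.

(** Only the monotonicity of [p] matters: [f] is positive and increasing on
    [[y0, +oo)], so [p = 1/f] is nonincreasing there.  Refining the step from
    [eps] to [eps/j] replaces each right-endpoint rectangle of width [eps] by
    [j] rectangles whose heights are evaluated no further to the right, hence
    [Sigma_{l,eps/j,j N} >= Sigma_{l,eps,N}].  Taking [N = n_2^(1)], the
    threshold [b] is reached within [j n_2^(1)] fine steps, which gives both
    the existence of [n_2^(j)] and [n_2^(j) <= j n_2^(1)]. *)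

From Stdlib Require Import Reals Lra Lia Wf_nat.
From Coquelicot Require Import Coquelicot.
Open Scope R_scope.

Section HalfLineDerivative.

Variables (a : R) (g g' : R -> R).
Hypothesis g_derive : is_derive_on_half a g g'.

Lemma is_derive_on_half_quotient y : a <= y ->
  forall e, 0 < e -> exists d, 0 < d /\
    forall t, a <= t -> t <> y -> Rabs (t - y) < d ->
      Rabs ((g t - g y) / (t - y) - g' y) < e.
Proof.
  intros Hy e He.
  destruct (proj1 (filterlim_locally _ _) (g_derive y Hy) (mkposreal e He)) as [d Hd].
  exists (pos d); split; [apply cond_pos|].
  intros t Hat Hty Hd'; exact (Hd t Hd' (conj Hat Hty)).
Qed.

Lemma is_derive_on_half_interior y : a < y -> derivable_pt_lim g y (g' y).
Proof.
  intros Hy e He.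
  destruct (is_derive_on_half_quotient y (Rlt_le _ _ Hy) e He) as [d [Hd Hq]].
  assert (Hr : 0 < Rmin d (y - a)) by (apply Rmin_pos; lra).
  exists (mkposreal _ Hr); intros h Hh0 Hh; simpl in Hh.
  pose proof (Rmin_l d (y - a)); pose proof (Rmin_r d (y - a)).
  pose proof (Rle_abs (- h)); rewrite Rabs_Ropp in *.
  replace h with (y + h - y) at 2 by ring.
  apply Hq; [lra | lra | replace (y + h - y) with h by ring; lra].
Qed.

Hypothesis g'_pos : forall y, a <= y -> 0 < g' y.

Lemma is_derive_on_half_increasing_interior y z : a < y -> y < z -> g y < g z.
Proof.
  intros Hy Hyz.
  destruct (MVT_cor2 g g' y z Hyz) as [c [Hc1 Hc2]].
  - intros c Hc; apply is_derive_on_half_interior; lra.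
  - assert (0 < g' c) by (apply g'_pos; lra); nra.
Qed.

(** At the endpoint no mean value theorem is available; a positive right
    derivative still puts a value above [g a] in every interval [(a, z)]. *)
Lemma is_derive_on_half_right_above z : a < z -> exists t, a < t < z /\ g a < g t.
Proof.
  intros Haz.
  pose proof (g'_pos a (Rle_refl a)) as Hpos.
  destruct (is_derive_on_half_quotient a (Rle_refl a) (g' a / 2)) as [d [Hd Hq]];
    [lra|].
  set (t := a + Rmin d (z - a) / 2).
  assert (Hr : 0 < Rmin d (z - a)) by (apply Rmin_pos; lra).
  pose proof (Rmin_l d (z - a)); pose proof (Rmin_r d (z - a)).
  assert (Hat : a < t) by (unfold t; lra).
  exists t; split; [unfold t; lra|].
  assert (Hdist : Rabs (t - a) < d) by (rewrite Rabs_right; unfold t; lra).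
  destruct (Rabs_def2 _ _ (Hq t (Rlt_le _ _ Hat) ltac:(lra) Hdist)) as [_ Hlow].
  assert (Hquot : 0 < (g t - g a) / (t - a)) by lra.
  replace (g t) with (g a + (g t - g a) / (t - a) * (t - a)) by (field; lra).
  assert (0 < (g t - g a) / (t - a) * (t - a)) by (apply Rmult_lt_0_compat; lra).
  lra.
Qed.

Lemma is_derive_on_half_nondecreasing y z : a <= y -> y <= z -> g y <= g z.
Proof.
  intros Hy Hyz.
  destruct (Req_dec y z) as [<-|Hne]; [lra|].
  destruct (Req_dec y a) as [->|Hya].
  - destruct (is_derive_on_half_right_above z ltac:(lra)) as [t [Ht Hgt]].
    pose proof (is_derive_on_half_increasing_interior t z ltac:(lra) ltac:(lra)).
    lra.
  - apply Rlt_le, is_derive_on_half_increasing_interior; lra.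
Qed.

End HalfLineDerivative.

Lemma sigma_l_refine (p : R -> R) (y0 h : R) (j : nat) :
  0 < h -> (1 <= j)%nat ->
  (forall y z, y0 <= y -> y <= z -> p z <= p y) ->
  forall n, sigma_l p y0 h n <= sigma_l p y0 (h / INR j) (j * n).
Proof.
  intros Hh Hj p_noninc.
  assert (Hjpos : 0 < INR j) by (apply lt_0_INR; lia).
  set (hj := h / INR j).
  assert (Hhj : 0 < hj) by (apply Rdiv_lt_0_compat; lra).
  assert (Hscale : hj * INR j = h) by (unfold hj; field; lra).
  induction n as [|n IH]; [rewrite Nat.mul_0_r; simpl; lra|].
  (* Each of the first [k <= j] fine rectangles of the block is at least as high
     as the coarse rectangle, whose height is taken at the block's right end. *)
  assert (Hblock : forall k, (k <= j)%nat ->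
    sigma_l p y0 hj (j * n) + INR k * (hj * p (y0 + h * INR (S n)))
      <= sigma_l p y0 hj (j * n + k)).
  { induction k as [|k IHk]; intros Hk.
    - rewrite Nat.add_0_r; simpl; lra.
    - replace (j * n + S k)%nat with (S (j * n + k)) by lia.
      assert (Hleft : 0 <= hj * INR (S (j * n + k)))
        by (apply Rmult_le_pos; [lra | apply pos_INR]).
      assert (Hpos : hj * INR (S (j * n + k)) <= h * INR (S n)).
      { rewrite <- Hscale, Rmult_assoc, <- mult_INR.
        apply Rmult_le_compat_l; [lra | apply le_INR; lia]. }
      pose proof (p_noninc (y0 + hj * INR (S (j * n + k))) (y0 + h * INR (S n))
                    ltac:(lra) ltac:(lra)) as Hheight.
      cbn [sigma_l]; rewrite (S_INR k).
      pose proof (IHk ltac:(lia)).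
      pose proof (Rmult_le_compat_l hj _ _ (Rlt_le _ _ Hhj) Hheight).
      lra. }
  specialize (Hblock j (le_n j)).
  rewrite Nat.mul_succ_r; cbn [sigma_l].
  replace (INR j * (hj * p (y0 + h * INR (S n))))
    with (h * p (y0 + h * INR (S n))) in Hblock by (rewrite <- Hscale; ring).
  lra.
Qed.

Lemma is_n2_exists_le (p : R -> R) (y0 h b : R) (K : nat) :
  (1 <= K)%nat -> b <= sigma_l p y0 h K ->
  exists N, is_n2 p y0 h b N /\ (N <= K)%nat.
Proof.
  intros HK Hb.
  set (P := fun N => (1 <= N)%nat /\ b <= sigma_l p y0 h N).
  assert (Pdec : forall N, P N \/ ~ P N).
  { intros N; destruct (Compare_dec.le_dec 1 N), (Rle_dec b (sigma_l p y0 h N));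
      [left; split | right; intros []..]; tauto. }
  destruct (dec_inh_nat_subset_has_unique_least_element P Pdec
              (ex_intro _ K (conj HK Hb))) as [N [[[HN1 HNb] Hleast] _]].
  exists N; split; [|exact (Hleast K (conj HK Hb))].
  split; [exact HN1|]; split; [exact HNb|].
  intros M HM1 HMN; apply Rnot_le_lt; intros HMb.
  pose proof (Hleast M (conj HM1 HMb)); lia.
Qed.

Theorem lemma1 (y0 b eps : R) (f : R -> R) (n1 : nat) :
  0 < b -> 0 < eps ->
  (forall y, y0 <= y -> f y <> 0) ->
  (exists p1 p2 : R -> R,
      is_derive_on_half y0 (fun y => / f y) p1 /\
      is_derive_on_half y0 p1 p2 /\
      (forall y, y0 <= y -> 0 < p2 y)) ->
  0 < f y0 ->
  (exists f1 : R -> R,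
      is_derive_on_half y0 f f1 /\ (forall y, y0 <= y -> 0 < f1 y)) ->
  Rbar_lt (Finite b) (Lim (fun T => RInt (fun y => / f y) y0 T) p_infty) ->
  is_n2 (fun y => / f y) y0 (eps / INR 1) b n1 ->
  forall j : nat, (1 <= j)%nat ->
    exists N : nat,
      is_n2 (fun y => / f y) y0 (eps / INR j) b N /\
      (eps / INR j) * INR N <= (eps / INR 1) * INR n1.
Proof.
  intros _ Heps _ _ Hf0 [f1 [Hf Hf1]] _ [Hn1 [Hn1b _]] j Hj.
  replace (eps / INR 1) with eps in * by (simpl; field).
  assert (p_noninc : forall y z, y0 <= y -> y <= z -> / f z <= / f y).
  { intros y z Hy Hyz.
    pose proof (is_derive_on_half_nondecreasing _ _ _ Hf Hf1 y0 y (Rle_refl _) Hy).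
    pose proof (is_derive_on_half_nondecreasing _ _ _ Hf Hf1 y z Hy Hyz).
    apply Rinv_le_contravar; lra. }
  pose proof (sigma_l_refine _ y0 eps j Heps Hj p_noninc n1) as Hrefine.
  destruct (is_n2_exists_le (fun y => / f y) y0 (eps / INR j) b (j * n1)
              ltac:(nia) ltac:(lra)) as [N [HN HNle]].
  exists N; split; [exact HN|].
  assert (Hjpos : 0 < INR j) by (apply lt_0_INR; lia).
  assert (INR N <= INR j * INR n1) by (rewrite <- mult_INR; apply le_INR; lia).
  replace (eps * INR n1) with (eps / INR j * (INR j * INR n1)) by (field; lra).
  apply Rmult_le_compat_l; [apply Rlt_le, Rdiv_lt_0_compat|]; lra.
Qed.
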